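(* Let $K$ be a totally real number field of degree $n$ and let $S\subseteq\mathbb{R}^n$ be a polytope of dimension $n-1$ whose vertices are images $\iota_M(\alpha)$ of elements $\alpha\in\mathcal{O}_K^+$. Suppose $S$ is contained in the hyperplane $\{x\in\mathbb{R}^n:\sum_{i=1}^n\tau_i(\delta)x_i=1\}$ for some $\delta\in\mathcal{O}_K^{\vee,+}$. Then $S\subseteq\mathcal{S}_K$.
   Context: $\tau_1,\dots,\tau_n$ are the real embeddings of $K$, $\iota_M:K\to\mathbb{R}^n$, $\alpha\mapsto(\tau_1(\alpha),\dots,\tau_n(\alpha))$, $\Lambda=\iota_M(\mathcal{O}_K)$. $\mathcal{O}_K^+$ is the set of totally positive elements of $\mathcal{O}_K$. The sail $\mathcal{S}_K$ is the boundary of the Klein polyhedron $\operatorname{Conv}(\Lambda\cap\mathbb{R}_{>0}^n)$. The codifferent is $\mathcal{O}_K^\vee=\{\delta\in K:\operatorname{Tr}_{K/\mathbb{Q}}(\delta\alpha)\in\mathbb{Z}\ \forall\alpha\in\mathcal{O}_K\}$ and $\mathcal{O}_K^{\vee,+}$ is the set of its totally positive elements. *)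

From HB Require Import structures.
From mathcomp Require Import all_boot all_order all_algebra all_field.
From mathcomp Require Import all_classical all_reals all_analysis.
Set Implicit Arguments. Unset Strict Implicit. Unset Printing Implicit Defensive.
Import Order.TTheory GRing.Theory Num.Theory.
Import numFieldNormedType.Exports.
Local Open Scope classical_set_scope.
Local Open Scope ring_scope.

Section NF.
Variables (R : realType) (K : fieldExtType rat) (n : nat).
Variable tau : 'I_n -> {rmorphism K -> R}.

(* tau_1,...,tau_n are exactly the real embeddings of the totally real field K of degree n *)
Definition totally_real_embeddings : Prop :=
  (\dim {:K} = n)%N /\ injective (fun i x => tau i x).

Definition integral (a : K) : Prop :=
  exists p : {poly int}, p \is monic /\ root (map_poly (fun z : int => z%:~R) p) a.

Definition trace (x : K) : R := \sum_(i < n) tau i x.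

Definition totally_positive (x : K) : Prop := forall i, 0 < tau i x.

Definition integral_pos (a : K) : Prop := integral a /\ totally_positive a.

Definition codifferent (d : K) : Prop :=
  forall a : K, integral a -> exists z : int, trace (d * a) = z%:~R.

Definition codifferent_pos (d : K) : Prop := codifferent d /\ totally_positive d.

Definition iotaM (a : K) : 'rV[R]_n := \row_i tau i a.

Definition Lambda : set 'rV[R]_n := [set iotaM a | a in integral].

Definition pos_orthant : set 'rV[R]_n := [set x | forall i, 0 < x ord0 i].

End NF.

Definition conv_hull (R : realType) (n : nat) (A : set 'rV[R]_n) : set 'rV[R]_n :=
  [set x | exists (m : nat) (p : 'I_m -> 'rV[R]_n) (w : 'I_m -> R),
      (forall j, A (p j)) /\ (forall j, 0 <= w j) /\ \sum_(j < m) w j = 1 /\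
      x = \sum_(j < m) w j *: p j].

Definition boundary (R : realType) (n : nat) (A : set 'rV[R]_n) : set 'rV[R]_n :=
  closure A `\` interior A.

Definition sail (R : realType) (K : fieldExtType rat) (n : nat)
  (tau : 'I_n -> {rmorphism K -> R}) : set 'rV[R]_n :=
  boundary (conv_hull (Lambda tau `&` @pos_orthant R n)).

Definition affine_rank (R : realType) (n m : nat) (p : 'I_m -> 'rV[R]_n)
  (j0 : 'I_m) : nat := \rank (\matrix_(j < m, i < n) (p j - p j0) ord0 i).

From Pilot Require Import Defs.
From HB Require Import structures.
From mathcomp Require Import all_boot all_order all_algebra all_field.
From mathcomp Require Import all_classical all_reals all_analysis.
Import Order.TTheory GRing.Theory Num.Theory.
Import numFieldNormedType.Exports.
Set Implicit Arguments. Unset Strict Implicit. Unset Printing Implicit Defensive.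
Local Open Scope classical_set_scope.
Local Open Scope ring_scope.

(* The linear form x |-> <iota_M(delta), x> takes the value Tr(delta a) at
   iota_M(a); for a in O_K^+ this trace is a positive integer, hence >= 1.
   So the Klein polyhedron lies in the half-space <iota_M(delta), x> >= 1,
   while S lies in the bounding hyperplane and inside the polyhedron.  Since
   iota_M(delta) has positive coordinates, moving from a point of S slightly
   towards the origin leaves the half-space, so no point of S is interior. *)

Section LinearForm.
Variables (R : realType) (n : nat).

Definition pairing (c : 'I_n -> R) (x : 'rV[R]_n) : R :=
  \sum_(i < n) c i * x ord0 i.

Lemma pairing_convex_combination (c : 'I_n -> R) (k : nat)
    (w : 'I_k -> R) (p : 'I_k -> 'rV[R]_n) :
  pairing c (\sum_(j < k) w j *: p j) = \sum_(j < k) w j * pairing c (p j).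
Proof.
rewrite /pairing; under eq_bigr => i _ do rewrite summxE big_distrr /=.
rewrite exchange_big /=; apply: eq_bigr => j _.
by rewrite big_distrr /=; apply: eq_bigr => i _; rewrite mxE mulrCA.
Qed.

Lemma pairing_conv_hull_ge (c : 'I_n -> R) (b : R) (A : set 'rV[R]_n) :
  (forall a, A a -> b <= pairing c a) ->
  forall x, conv_hull A x -> b <= pairing c x.
Proof.
move=> Ab x [k [p [w [Ap [w_ge0 [w_sum1 ->]]]]]].
rewrite pairing_convex_combination -[b]mul1r -w_sum1 mulr_suml.
by apply: ler_sum => j _; rewrite ler_wpM2l ?Ab.
Qed.

Lemma pairing_shift (c : 'I_n -> R) (x : 'rV[R]_n) (t : R) :
  pairing c (x - t *: const_mx 1) = pairing c x - t * \sum_(i < n) c i.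
Proof.
rewrite /pairing big_distrr -sumrB; apply: eq_bigr => i _.
by rewrite !mxE mulr1 mulrBr [c i * t]mulrC.
Qed.

Lemma sum_gt0_of_pos (c : 'I_n -> R) :
  (0 < n)%N -> (forall i, 0 < c i) -> 0 < \sum_(i < n) c i.
Proof.
case: n c => // n' c _ c_gt0; rewrite big_ord_recl ltr_pwDl //.
by apply: sumr_ge0 => i _; rewrite ltW.
Qed.

Lemma pairing_gt0 (c : 'I_n -> R) (x : 'rV[R]_n) :
  (0 < n)%N -> (forall i, 0 < c i) -> pos_orthant x -> 0 < pairing c x.
Proof.
by move=> n_gt0 c_gt0 x_gt0; apply: sum_gt0_of_pos => // i; rewrite mulr_gt0.
Qed.

Lemma supporting_hyperplane_not_interior (c : 'I_n -> R) (b : R)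
    (C : set 'rV[R]_n) (x : 'rV[R]_n) :
  0 < \sum_(i < n) c i -> (forall y, C y -> b <= pairing c y) ->
  pairing c x = b -> ~ interior C x.
Proof.
move=> c_sum_gt0 C_ge x_on /nbhs_ballP [e e_gt0 ballC].
pose v := x - (e / 2) *: const_mx 1.
have v_near : ball x e v.
  split => // i j; rewrite /ball /= !mxE mulr1 opprB addrC subrK.
  by rewrite ger0_norm ?divr_ge0 ?ltW // ltr_pdivrMr // ltr_pMr // ltr1n.
have := C_ge v (ballC v v_near); rewrite pairing_shift x_on.
by rewrite lerBrDr gerDl leNgt mulr_gt0 ?divr_gt0.
Qed.

Lemma conv_hullS (A B : set 'rV[R]_n) : A `<=` B -> conv_hull A `<=` conv_hull B.
Proof.
move=> AB x [k [p [w [Ap w_convex]]]].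
by exists k, p, w; split => // j; apply: AB.
Qed.

End LinearForm.

Lemma dim_gt0_of_pairing_neq0 (R : realType) (n : nat)
    (c : 'I_n -> R) (x : 'rV[R]_n) :
  pairing c x != 0 -> (0 < n)%N.
Proof. by case: n c x => // c x; rewrite /pairing big_ord0 eqxx. Qed.

Section Codifferent.
Variables (R : realType) (K : fieldExtType rat) (n : nat).
Variable tau : 'I_n -> {rmorphism K -> R}.

Lemma pairing_iotaM (d a : K) :
  pairing (fun i => tau i d) (iotaM tau a) = trace tau (d * a).
Proof. by apply: eq_bigr => i _; rewrite mxE rmorphM. Qed.

Lemma trace_codifferent_ge1 (d a : K) :
  (0 < n)%N -> codifferent_pos tau d -> Defs.integral a ->
  pos_orthant (iotaM tau a) ->
  1 <= trace tau (d * a).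
Proof.
move=> n_gt0 [d_cod d_pos] a_int a_pos.
have [z tr_z] := d_cod a a_int.
have : 0 < trace tau (d * a) by rewrite -pairing_iotaM pairing_gt0.
by rewrite tr_z ltr0z ler1z -gtz0_ge1.
Qed.

Lemma klein_polyhedron_ge1 (d : K) (x : 'rV[R]_n) :
  (0 < n)%N -> codifferent_pos tau d ->
  conv_hull (Lambda tau `&` @pos_orthant R n) x ->
  1 <= pairing (fun i => tau i d) x.
Proof.
move=> n_gt0 d_pos; apply: pairing_conv_hull_ge => _ [[a a_int <-] a_pos].
by rewrite pairing_iotaM trace_codifferent_ge1.
Qed.

Lemma integral_pos_in_klein (a : K) :
  integral_pos tau a -> (Lambda tau `&` @pos_orthant R n) (iotaM tau a).
Proof.
by case=> a_int a_pos; split; [exists a | move=> i; rewrite mxE].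
Qed.

End Codifferent.

Theorem lemma2p9 (R : realType) (K : fieldExtType rat) (n : nat)
  (tau : 'I_n -> {rmorphism K -> R})
  (HK : totally_real_embeddings tau)
  (m : nat) (alpha : 'I_m -> K)
  (Halpha : forall j, integral_pos tau (alpha j))
  (j0 : 'I_m)
  (Hdim : affine_rank (fun j => iotaM tau (alpha j)) j0 = n.-1)
  (delta : K) (Hdelta : codifferent_pos tau delta)
  (Hplane : forall x, conv_hull [set iotaM tau (alpha j) | j in [set: 'I_m]] x ->
              \sum_(i < n) tau i delta * x ord0 i = 1) :
  conv_hull [set iotaM tau (alpha j) | j in [set: 'I_m]] `<=` sail tau.
Proof.
move=> x x_S.
have x_on : pairing (fun i => tau i delta) x = 1 := Hplane x x_S.
have n_gt0 : (0 < n)%N.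
  apply: (dim_gt0_of_pairing_neq0 (c := fun i => tau i delta) (x := x)).
  by rewrite x_on oner_neq0.
have x_klein : conv_hull (Lambda tau `&` @pos_orthant R n) x.
  by apply: conv_hullS x_S => _ [j _ <-]; apply: integral_pos_in_klein.
split; first exact: subset_closure.
apply: supporting_hyperplane_not_interior x_on.
- by apply: sum_gt0_of_pos => // i; case: Hdelta.
- by move=> y; apply: klein_polyhedron_ge1.
Qed.
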